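(* Let $\mathbb F$ be a finitely generated free group with symmetric free generating set $S$, let $\mathcal G=(V,E)$ be a constraint graph with $V$ and $E$ finite, and let $X=X_{\mathcal G}\subset V^{\mathbb F}$ be the graph subshift determined by $\mathcal G$. If there exists a shift-invariant Borel probability measure $\mu$ on $X$, then there exists a periodic treequence $x\in X$. Moreover, if for some $v\in V$ one has $\mu(\{x\in X: x(\mathrm{id})=v\})>0$, then there exists a periodic treequence $x\in X$ with $x(\mathrm{id})=v$.
   Context: $S=B\cup B^{-1}$ for a free basis $B$ of $\mathbb F$; $\mathrm{id}$ is the identity of $\mathbb F$. A constraint graph is a pair $\mathcal G=(V,E)$ with $E\subset V\times V\times S$; a triple $(v,w;s)\in E$ is a directed edge from $v$ to $w$ labeled $s$. Elements of $V^{\mathbb F}$ (functions $\mathbb F\to V$) are called treequences; $V^{\mathbb F}$ carries the product topology ($V$ discrete). The graph subshift $X_{\mathcal G}$ is the set of $x\in V^{\mathbb F}$ such that $(x(f),x(fs);s)\in E$ for all $f\in\mathbb F$, $s\in S$. $\mathbb F$ acts by shifts $(\sigma_gx)(f)=x(g^{-1}f)$; a measure $\mu$ is shift-invariant if $\mu(\sigma_gA)=\mu(A)$ for all $g$ and Borel $A$. A treequence $x$ is periodic if $\{f\in\mathbb F:\sigma_fx=x\}$ has finite index in $\mathbb F$. *)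

From mathcomp Require Import all_boot.
From Stdlib Require Import Reals.

Set Implicit Arguments.
Unset Strict Implicit.
Unset Printing Implicit Defensive.

(* A letter (i, b) stands for the basis element b_i if b = false
   and for its inverse b_i^{-1} if b = true.  Letters form S = B ∪ B^{-1}. *)
Definition letter (n : nat) := ('I_n * bool)%type.

Definition inv_letter n (l : letter n) : letter n := (l.1, ~~ l.2).

Definition reduced n (w : seq (letter n)) : bool :=
  sorted (fun a b => b != inv_letter a) w.

Definition push n (l : letter n) (w : seq (letter n)) : seq (letter n) :=
  match w with
  | [::] => [:: l]
  | l' :: w' => if l' == inv_letter l then w' else l :: w
  end.

Definition reduce n (s : seq (letter n)) : seq (letter n) := foldr (@push n) [::] s.

Lemma push_reduced n (l : letter n) w : reduced w -> reduced (push l w).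
Proof.
case: w => [|l' w] //= H.
case: ifP => Hl; first exact: path_sorted H.
by rewrite /reduced /= Hl H.
Qed.

Lemma reduced_reduce n (s : seq (letter n)) : reduced (reduce s).
Proof. by elim: s => [|l s IH] //=; apply: push_reduced. Qed.

Definition FG (n : nat) := {w : seq (letter n) | reduced w}.

Definition fg_mul n (u v : FG n) : FG n :=
  exist _ (reduce (proj1_sig u ++ proj1_sig v)) (reduced_reduce _).

Definition fg_inv n (u : FG n) : FG n :=
  exist _ (reduce (rev (map (@inv_letter n) (proj1_sig u)))) (reduced_reduce _).

Definition fg_id n : FG n := exist _ [::] (erefl true).

Definition fg_gen n (s : letter n) : FG n := exist _ [:: s] (erefl true).

Definition constraint_graph (V : finType) (n : nat) := V -> V -> letter n -> bool.

Definition treequence (V : Type) (n : nat) := FG n -> V.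

Definition in_subshift (V : finType) n (E : constraint_graph V n)
  (x : treequence V n) : Prop :=
  forall (f : FG n) (s : letter n), E (x f) (x (fg_mul f (fg_gen s))) s.

Definition shift V n (g : FG n) (x : treequence V n) : treequence V n :=
  fun f => x (fg_mul (fg_inv g) f).

(* periodic: the stabilizer {f | σ_f x = x} has finite index, i.e. finitely
   many left cosets r·Stab cover F *)
Definition stabilizes V n (x : treequence V n) (f : FG n) : Prop :=
  forall h, shift f x h = x h.

Definition periodic V n (x : treequence V n) : Prop :=
  exists reps : seq (FG n),
    forall f : FG n, exists2 r, List.In r reps & stabilizes x (fg_mul (fg_inv r) f).

(* open sets of V^F with the product topology (V discrete): membership in U
   is witnessed by agreement on a finite set of coordinates *)
Definition open_set V n (U : treequence V n -> Prop) : Prop :=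
  forall x, U x -> exists K : seq (FG n),
    forall y, (forall f, List.In f K -> y f = x f) -> U y.

Definition sigma_algebra (T : Type) (M : (T -> Prop) -> Prop) : Prop :=
  [/\ M (fun _ => True),
      (forall A, M A -> M (fun t => ~ A t)) &
      (forall A : nat -> T -> Prop, (forall k, M (A k)) -> M (fun t => exists k, A k t))].

Definition borel V n (A : treequence V n -> Prop) : Prop :=
  forall M, sigma_algebra M -> (forall U, open_set U -> M U) -> M A.

(* Borel probability measure on V^F (values outside Borel sets are irrelevant) *)
Definition borel_prob_measure V n (mu : (treequence V n -> Prop) -> R) : Prop :=
  [/\ (forall A, borel A -> (0 <= mu A)%R),
      mu (fun _ => True) = 1%R &
      (forall A : nat -> treequence V n -> Prop,
          (forall k, borel (A k)) ->
          (forall i j x, i <> j -> A i x -> A j x -> False) ->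
          infinite_sum (fun k => mu (A k)) (mu (fun x => exists k, A k x)))].

(* shift invariance: mu(σ_g A) = mu(A) for all g and Borel A.
   Here σ_g A = {σ_g y | y ∈ A} = {z | A (σ_{g^{-1}} z)}. *)
Definition shift_invariant V n (mu : (treequence V n -> Prop) -> R) : Prop :=
  forall (g : FG n) (A : treequence V n -> Prop),
    borel A -> mu (fun z => A (shift (fg_inv g) z)) = mu A.

(* The frequencies pi(v) = mu{x | x(id) = v} of vertices at the root
   and P_i(v,w) = mu{x | x(id) = v, x(b_i) = w} of [b_i]-edges are
   nonnegative, every row sum and (by shift invariance) every column sum of
   P_i equals pi, and P_i is supported on edges allowed in both directions.
   These are integer linear constraints, so by a rational approximation
   argument (Gaussian elimination, then rounding) they have a solution in
   natural numbers N, M_i with the same support.  Repeating each vertex [v]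
   N(v) times gives a finite set on which each M_i is realised by a
   permutation; letting [b_i] act by these permutations, the labels along
   the orbit of a copy of [v] form a periodic point of X_G through [v]. *)

From Pilot Require Import Defs.
From mathcomp Require Import all_boot fingroup perm.
From Stdlib Require Import Reals Lra Lia ZArith.
From Stdlib Require Import Classical ClassicalEpsilon FunctionalExtensionality PropExtensionality.
From HB Require Import structures.
Import Pilot.Defs.

Set Implicit Arguments.
Unset Strict Implicit.
Unset Printing Implicit Defensive.

Lemma Rplus_associative : associative Rplus.
Proof. by move=> x y z; rewrite Rplus_assoc. Qed.
HB.instance Definition _ :=
  Monoid.isComLaw.Build R 0%R Rplus Rplus_associative Rplus_comm Rplus_0_l.

Lemma Zplus_associative : associative Z.add.
Proof. by move=> x y z; rewrite Z.add_assoc. Qed.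
HB.instance Definition _ :=
  Monoid.isComLaw.Build Z 0%Z Z.add Zplus_associative Z.add_comm Z.add_0_l.

Lemma IZR_big (I : Type) (r : seq I) (P : pred I) (F : I -> Z) :
  IZR (\big[Z.add/0%Z]_(i <- r | P i) F i) = \big[Rplus/0%R]_(i <- r | P i) IZR (F i).
Proof. exact: (big_morph IZR plus_IZR). Qed.

Lemma INR_big (I : Type) (r : seq I) (P : pred I) (F : I -> nat) :
  INR (\sum_(i <- r | P i) F i) = \big[Rplus/0%R]_(i <- r | P i) INR (F i).
Proof. exact: (big_morph INR plus_INR). Qed.

Lemma In_mem (T : eqType) (x : T) (s : seq T) : x \in s -> List.In x s.
Proof. by elim: s => //= a s IH; rewrite inE => /orP [/eqP ->|/IH]; [left|right]. Qed.

Section IntegerPoints.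
Variable J : finType.

Definition dotZ (c z : J -> Z) : Z := \big[Z.add/0%Z]_(j : J) (c j * z j)%Z.
Definition dotR (c : J -> Z) (y : J -> R) : R := \big[Rplus/0%R]_(j : J) (IZR (c j) * y j)%R.

Lemma sumZ_mull (k : Z) (F : J -> Z) :
  \big[Z.add/0%Z]_(j : J) (k * F j)%Z = (k * \big[Z.add/0%Z]_(j : J) F j)%Z.
Proof. by apply: (big_ind2 (fun a b => a = k * b)%Z) => [|a b a' b' -> ->|//]; lia. Qed.

Lemma sumR_mull (k : R) (F : J -> R) :
  \big[Rplus/0%R]_(j : J) (k * F j)%R = (k * \big[Rplus/0%R]_(j : J) F j)%R.
Proof. by apply: (big_ind2 (fun a b => a = k * b)%R) => [|a b a' b' -> ->|//]; ring. Qed.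

Lemma sumR_le (F G : J -> R) : (forall j, F j <= G j)%R ->
  (\big[Rplus/0%R]_(j : J) F j <= \big[Rplus/0%R]_(j : J) G j)%R.
Proof.
by move=> FG; apply: (big_ind2 (fun a b => a <= b)%R) => // *; lra.
Qed.

Lemma dotZ_IZR (c z : J -> Z) : IZR (dotZ c z) = dotR c (fun j => IZR (z j)).
Proof. by rewrite /dotZ IZR_big; apply: eq_bigr => j _; rewrite mult_IZR. Qed.

Lemma dotZ_lin (a b : Z) (c e z : J -> Z) :
  dotZ (fun j => a * c j + b * e j)%Z z = (a * dotZ c z + b * dotZ e z)%Z.
Proof. by rewrite /dotZ -!sumZ_mull -big_split; apply: eq_bigr => j _ /=; ring. Qed.

Lemma dotR_lin (a b : Z) (c e : J -> Z) (y : J -> R) :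
  dotR (fun j => a * c j + b * e j)%Z y = (IZR a * dotR c y + IZR b * dotR e y)%R.
Proof.
rewrite /dotR -!sumR_mull -big_split; apply: eq_bigr => j _ /=.
by rewrite plus_IZR !mult_IZR; ring.
Qed.

Lemma dotZ_move (a t : Z) (j1 : J) (c z : J -> Z) :
  dotZ c (fun j => a * z j + (if j == j1 then t else 0))%Z = (a * dotZ c z + c j1 * t)%Z.
Proof.
rewrite /dotZ -sumZ_mull (bigD1 j1) //= [in RHS](bigD1 j1) //= eqxx.
rewrite (eq_bigr (fun j => a * (c j * z j))%Z); first ring.
by move=> j /negbTE -> /=; ring.
Qed.

Lemma dotZ_zero (c z : J -> Z) : (forall j, c j = 0%Z) -> dotZ c z = 0%Z.
Proof. by move=> c0; rewrite /dotZ big1 // => j _; rewrite c0. Qed.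

Lemma dot_roundup (d : J -> Z) (y : J -> R) (K : R) :
  (K * dotR d y - IZR (\big[Z.add/0%Z]_(j : J) Z.abs (d j))
     <= IZR (dotZ d (fun j => up (K * y j))))%R.
Proof.
rewrite dotZ_IZR /dotR IZR_big -sumR_mull.
suff : (\big[Rplus/0%R]_(j : J) (K * (IZR (d j) * y j) - IZR (Z.abs (d j)))
          <= \big[Rplus/0%R]_(j : J) (IZR (d j) * IZR (up (K * y j))))%R.
  by rewrite big_split /= -(big_morph Ropp Ropp_plus_distr Ropp_0); lra.
apply: sumR_le => j; have [up_gt up_le] := archimed (K * y j).
case: (Z_le_gt_dec 0 (d j)) => [d_ge0|d_lt0].
- rewrite Z.abs_eq //; have := IZR_le _ _ d_ge0; nra.
- rewrite Z.abs_neq ?opp_IZR; last lia.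
  have : (IZR (d j) < 0)%R by apply: IZR_lt; lia.
  nra.
Qed.

Lemma finite_upper_bound (A : Type) (t : A -> R) (l : list A) :
  exists K, forall d, List.In d l -> (t d <= K)%R.
Proof.
elim: l => [|d0 l [K HK]]; first by exists 0%R.
exists (Rmax (t d0) K) => d [<-|dl]; first exact: Rmax_l.
exact: Rle_trans (HK d dl) (Rmax_r _ _).
Qed.

Lemma integer_point_open_cone (ineqs : list (J -> Z)) (y : J -> R) :
  (forall d, List.In d ineqs -> dotR d y > 0)%R ->
  exists z, forall d, List.In d ineqs -> (dotZ d z > 0)%Z.
Proof.
move=> y_pos.
pose l1 d := IZR (\big[Z.add/0%Z]_(j : J) Z.abs (d j)).
have [K HK] := finite_upper_bound (fun d => (l1 d + 1) / dotR d y)%R ineqs.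
exists (fun j => up (K * y j)) => d dl; apply/Z.lt_gt/lt_IZR.
have dy_pos := y_pos d dl.
have : (l1 d + 1 <= K * dotR d y)%R.
  have := Rmult_le_compat_r _ _ _ (Rlt_le _ _ dy_pos) (HK d dl).
  by rewrite /Rdiv Rmult_assoc Rinv_l; lra.
have := dot_roundup d y K; rewrite -/(l1 d); lra.
Qed.

(* Gaussian elimination of one equation [e] on a pivot coordinate [j1]:
   [pivot e j1 c] is a positive multiple of [c], corrected by a multiple of
   [e], which no longer involves [j1]; [unpivot] transports integer points
   back, landing on the hyperplane [e = 0]. *)
Definition pivot (e : J -> Z) (j1 : J) (c : J -> Z) : J -> Z :=
  fun j => (Z.abs (e j1) * c j + - (Z.sgn (e j1) * c j1) * e j)%Z.

Definition unpivot (e : J -> Z) (j1 : J) (z : J -> Z) : J -> Z :=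
  fun j => (Z.abs (e j1) * z j + (if j == j1 then - Z.sgn (e j1) * dotZ e z else 0))%Z.

Lemma dotR_pivot (e c : J -> Z) (j1 : J) (y : J -> R) : dotR e y = 0%R ->
  dotR (pivot e j1 c) y = (IZR (Z.abs (e j1)) * dotR c y)%R.
Proof. by move=> ey0; rewrite /pivot dotR_lin ey0; ring. Qed.

Lemma dotZ_unpivot (e c : J -> Z) (j1 : J) (z : J -> Z) :
  dotZ c (unpivot e j1 z) = dotZ (pivot e j1 c) z.
Proof. by rewrite /unpivot dotZ_move /pivot dotZ_lin; ring. Qed.

Lemma dotZ_unpivot_self (e : J -> Z) (j1 : J) (z : J -> Z) :
  dotZ e (unpivot e j1 z) = 0%Z.
Proof.
rewrite dotZ_unpivot; apply: dotZ_zero => j; rewrite /pivot.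
have -> : (Z.sgn (e j1) * e j1 = Z.abs (e j1))%Z by lia.
ring.
Qed.

(* A real point of the relatively open cone {c = 0 (c in eqs), d > 0 (d in
   ineqs)} yields an integer point of the same cone: eliminate the equations
   one at a time, then round. *)
Lemma integer_point_cone (eqs ineqs : list (J -> Z)) (y : J -> R) :
  (forall e, List.In e eqs -> dotR e y = 0%R) ->
  (forall d, List.In d ineqs -> dotR d y > 0)%R ->
  exists z, (forall e, List.In e eqs -> dotZ e z = 0%Z) /\
            (forall d, List.In d ineqs -> (dotZ d z > 0)%Z).
Proof.
move: {2}(size eqs) (erefl (size eqs)) => m.
elim: m eqs ineqs => [|m IH] [|e eqs] // ineqs.
  by move=> _ _ /integer_point_open_cone [z Hz]; exists z.
case=> size_eqs eqs_y ineqs_y.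
case: (pickP (fun j => ~~ Z.eqb (e j) 0)) => [j1 /negP e_j1 | e0]; last first.
  have [z [z_eqs z_ineqs]] := IH eqs ineqs size_eqs (fun c h => eqs_y c (or_intror h)) ineqs_y.
  exists z; split=> // c [<-|c_eqs]; last exact: z_eqs.
  by apply: dotZ_zero => j; apply/Z.eqb_eq/negbFE/e0.
have ey0 := eqs_y e (or_introl erefl).
have abs_pos : (0 < IZR (Z.abs (e j1)))%R.
  by apply: IZR_lt; case: (e j1) e_j1 => //= *; lia.
have [z [z_eqs z_ineqs]] :
    exists z, (forall c, List.In c (List.map (pivot e j1) eqs) -> dotZ c z = 0%Z) /\
              (forall c, List.In c (List.map (pivot e j1) ineqs) -> (dotZ c z > 0)%Z).
  apply: IH; first by rewrite size_map.
  - move=> _ /List.in_map_iff [c [<- c_eqs]].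
    by rewrite dotR_pivot // eqs_y ?Rmult_0_r //; right.
  - move=> _ /List.in_map_iff [c [<- c_ineqs]].
    rewrite dotR_pivot //; have := ineqs_y c c_ineqs; nra.
exists (unpivot e j1 z); split.
- move=> c [<-|c_eqs]; first exact: dotZ_unpivot_self.
  by rewrite dotZ_unpivot; apply: z_eqs; apply: List.in_map.
- by move=> c c_ineqs; rewrite dotZ_unpivot; apply: z_ineqs; apply: List.in_map.
Qed.

Lemma integer_point_cone_fin (I1 I2 : finType) (eqs : I1 -> J -> Z) (ineqs : I2 -> J -> Z)
    (y : J -> R) :
  (forall k, dotR (eqs k) y = 0%R) -> (forall k, dotR (ineqs k) y > 0)%R ->
  exists z : J -> Z, (forall k, dotR (eqs k) (fun j => IZR (z j)) = 0%R) /\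
                     (forall k, 0 < dotR (ineqs k) (fun j => IZR (z j)))%R.
Proof.
move=> eqs_y ineqs_y.
have [z [z_eqs z_ineqs]] :
    exists z, (forall e, List.In e (List.map eqs (enum I1)) -> dotZ e z = 0%Z) /\
              (forall d, List.In d (List.map ineqs (enum I2)) -> (dotZ d z > 0)%Z).
  by apply: (integer_point_cone (y := y)) => _ /List.in_map_iff [k [<- _]].
have In_enum (I : finType) (k : I) : List.In k (enum I) by apply: In_mem; rewrite mem_enum.
exists z; split=> k; rewrite -dotZ_IZR.
- by rewrite z_eqs //; apply: List.in_map.
- by apply/IZR_lt/Z.gt_lt/z_ineqs/List.in_map.
Qed.

Definition coord (j0 : J) : J -> Z := fun j => if j == j0 then 1%Z else 0%Z.

Lemma dotR_coord (j0 : J) (y : J -> R) : dotR (coord j0) y = y j0.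
Proof.
rewrite /dotR (bigD1 j0) //= big1 /coord ?eqxx; first ring.
by move=> j /negbTE ->; ring.
Qed.

(* A nonnegative real solution of a homogeneous system of integer linear
   equations yields a solution in natural numbers with the same support:
   vanishing off the support is a further set of equations and positivity on
   it a set of strict inequalities. *)
Lemma nat_point_same_support (I : finType) (eqs : I -> J -> Z) (y : J -> R) :
  (forall j, 0 <= y j)%R -> (forall k, dotR (eqs k) y = 0%R) ->
  exists z : J -> nat, (forall k, dotR (eqs k) (fun j => INR (z j)) = 0%R) /\
                       (forall j, 0 < z j <-> (0 < y j)%R).
Proof.
move=> y_ge0 eqs_y.
pose pos (j : J) : bool := Rlt_dec 0 (y j).
have posP j : pos j <-> (0 < y j)%R by rewrite /pos; case: Rlt_dec.
pose eqs' (k : I + {j : J | ~~ pos j}) := match k with inl k => eqs k | inr j => coord (val j) end.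
pose ineqs (j : {j : J | pos j}) := coord (val j).
have eqs'_y k : dotR (eqs' k) y = 0%R.
  case: k => [k|[j /negP pos_j]] /=; first exact: eqs_y.
  by rewrite dotR_coord; apply: Rle_antisym (y_ge0 j); apply: Rnot_lt_le => /posP.
have ineqs_y j : (dotR (ineqs j) y > 0)%R.
  by case: j => j pos_j; rewrite /ineqs dotR_coord; apply/posP.
have [z [z_eqs z_ineqs]] := integer_point_cone_fin eqs'_y ineqs_y.
have z_pos j : pos j -> (0 < IZR (z j))%R.
  by move=> pos_j; have := z_ineqs (exist _ j pos_j); rewrite dotR_coord.
have z_zero j : ~~ pos j -> IZR (z j) = 0%R.
  by move=> pos_j; have := z_eqs (inr (exist _ j pos_j)); rewrite dotR_coord.
have nat_z j : INR (Z.to_nat (z j)) = IZR (z j).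
  rewrite INR_IZR_INZ Z2Nat.id //; apply: le_IZR.
  by case: (boolP (pos j)) => [/z_pos|/z_zero ->]; lra.
exists (fun j => Z.to_nat (z j)); split=> [k | j].
  by rewrite (functional_extensionality _ _ nat_z); apply: (z_eqs (inl k)).
rewrite -posP; split=> [/ltP/lt_INR | /z_pos z_gt0]; last by apply/ltP/INR_lt; rewrite nat_z.
by rewrite nat_z /=; case: (boolP (pos j)) => // /z_zero ->; lra.
Qed.

End IntegerPoints.

Definition balance (J : finType) (A B : {set J}) : J -> Z :=
  fun j => (Z.b2z (j \in A) - Z.b2z (j \in B))%Z.

Lemma dotR_balance (J : finType) (A B : {set J}) (y : J -> R) :
  dotR (balance A B) y =
  (\big[Rplus/0%R]_(j in A) y j - \big[Rplus/0%R]_(j in B) y j)%R.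
Proof.
rewrite /dotR !(big_mkcond (fun j => j \in _)) /Rminus (big_morph Ropp Ropp_plus_distr Ropp_0).
rewrite -big_split; apply: eq_bigr => j _ /=.
by rewrite /balance; case: (j \in A); case: (j \in B); rewrite /= ?minus_IZR; ring.
Qed.

(* Rounding step: nonnegative real frequencies [pi] of vertices and [P i]
   of [b_i]-edges whose row and column sums both equal [pi] can be replaced
   by natural numbers with the same marginal identities and the same
   support: the identities are integer linear equations in the coordinates
   [V + 'I_n * V * V]. *)
Lemma integral_frequencies (n : nat) (V : finType) (pi : V -> R)
    (P : 'I_n -> V -> V -> R) (v0 : V) :
  (forall v, 0 <= pi v)%R -> (forall i v w, 0 <= P i v w)%R ->
  (forall i v, \big[Rplus/0%R]_(w : V) P i v w = pi v) ->
  (forall i w, \big[Rplus/0%R]_(v : V) P i v w = pi w) ->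
  (0 < pi v0)%R ->
  exists (N : V -> nat) (M : 'I_n -> V -> V -> nat),
    [/\ forall i v, \sum_(w : V) M i v w = N v,
        forall i w, \sum_(v : V) M i v w = N w,
        0 < N v0
      & forall i v w, 0 < M i v w -> (0 < P i v w)%R].
Proof.
move=> pi_ge0 P_ge0 P_row P_col pi_v0.
pose J := (V + 'I_n * V * V)%type.
pose y (j : J) := match j with inl v => pi v | inr (i, v, w) => P i v w end.
pose out_edges i v : {set J} := [set inr (i, v, w) | w : V].
pose in_edges i w : {set J} := [set inr (i, v, w) | v : V].
have sum_out i v (F : J -> R) :
    \big[Rplus/0%R]_(j in out_edges i v) F j = \big[Rplus/0%R]_(w : V) F (inr (i, v, w)).
  by rewrite big_imset //= => w w' _ _ [].
have sum_in i w (F : J -> R) :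
    \big[Rplus/0%R]_(j in in_edges i w) F j = \big[Rplus/0%R]_(v : V) F (inr (i, v, w)).
  by rewrite big_imset //= => v v' _ _ [].
pose eqs (k : ('I_n * V) + ('I_n * V)) : J -> Z :=
  match k with
  | inl (i, v) => balance (out_edges i v) [set inl v]
  | inr (i, w) => balance (in_edges i w) [set inl w]
  end.
have y_ge0 j : (0 <= y j)%R by case: j => [v|[[i v] w]] /=.
have eqs_y k : dotR (eqs k) y = 0%R.
  case: k => [[i v]|[i w]]; rewrite /eqs dotR_balance big_set1 ?sum_out ?sum_in /=.
  - by rewrite P_row; ring.
  - by rewrite P_col; ring.
have [z [z_eqs z_supp]] := nat_point_same_support y_ge0 eqs_y.
exists (fun v => z (inl v)), (fun i v w => z (inr (i, v, w))).
split=> [i v | i w | | i v w];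
  [ | | exact: (z_supp (inl v0)).2 | exact: (z_supp (inr (i, v, w))).1].
- apply: INR_eq; rewrite INR_big.
  by have := z_eqs (inl (i, v)); rewrite /eqs dotR_balance sum_out big_set1; lra.
- apply: INR_eq; rewrite INR_big.
  by have := z_eqs (inr (i, w)); rewrite /eqs dotR_balance sum_in big_set1; lra.
Qed.

Section FreeAction.
Variables (n : nat) (O : finType) (sigma : 'I_n -> {perm O}).

Definition act_letter (w : O) (l : letter n) : O :=
  if l.2 then (sigma l.1)^-1%g w else sigma l.1 w.

Definition act_word (w : O) (s : seq (letter n)) : O := foldl act_letter w s.

Definition act (w : O) (f : FG n) : O := act_word w (proj1_sig f).

Lemma act_letterK (w : O) (l : letter n) :
  act_letter (act_letter w l) (inv_letter l) = w.
Proof. by case: l => i [] /=; rewrite /act_letter /= ?permK ?permKV. Qed.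

Lemma inv_letterK : involutive (@inv_letter n).
Proof. by case=> i b; rewrite /inv_letter /= negbK. Qed.

Lemma act_word_reduce (w : O) (s : seq (letter n)) : act_word w (reduce s) = act_word w s.
Proof.
elim: s w => [|l s IH] w //=; rewrite -IH.
case: (reduce s) => [|l' s'] //=; case: ifP => // /eqP ->.
by rewrite act_letterK.
Qed.

Lemma act_word_inv (w : O) (s : seq (letter n)) :
  act_word (act_word w s) (rev (map (@inv_letter n) s)) = w.
Proof.
elim: s w => [|l s IH] w //=.
rewrite rev_cons -cats1 /act_word foldl_cat /=.
by rewrite -/(act_word _ s) -/(act_word _ (rev _)) IH act_letterK.
Qed.

Lemma act_mul (w : O) (f g : FG n) : act w (fg_mul f g) = act (act w f) g.
Proof. by rewrite /act /= act_word_reduce /act_word foldl_cat. Qed.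

Lemma act_invK (w : O) (f : FG n) : act (act w f) (fg_inv f) = w.
Proof. by rewrite /act /= act_word_reduce act_word_inv. Qed.

Lemma act_Kinv (w : O) (f : FG n) : act (act w (fg_inv f)) f = w.
Proof.
rewrite /act /= act_word_reduce.
have := act_word_inv w (rev (map (@inv_letter n) (proj1_sig f))).
by rewrite map_rev revK -map_comp (eq_map inv_letterK) map_id.
Qed.

(* A labelled finite orbit gives a treequence: read the label of the point
   reached from [w0].  It is periodic, since the stabiliser of [w0] (a
   subgroup of index at most #|O|) fixes it. *)
Definition orbit_treequence (V : Type) (lab : O -> V) (w0 : O) : treequence V n :=
  fun f => lab (act w0 f).

Lemma orbit_treequence_periodic (V : Type) (lab : O -> V) (w0 : O) :
  periodic (orbit_treequence lab w0).
Proof.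
pose rep (w : O) := epsilon (inhabits (fg_id n)) (fun r => act w0 (fg_inv r) = w).
exists (List.map rep (enum O)) => f.
set w := act w0 (fg_inv f).
have rep_w : act w0 (fg_inv (rep w)) = w.
  by apply: (epsilon_spec (inhabits (fg_id n)) (fun r => act w0 (fg_inv r) = w)); exists f.
exists (rep w); first by apply/List.in_map/In_mem; rewrite mem_enum.
move=> h; rewrite /orbit_treequence.
set g := fg_mul (fg_inv (rep w)) f.
have g_fix : act w0 g = w0 by rewrite /g act_mul rep_w /w act_Kinv.
by rewrite /Defs.shift /= act_mul -{1}g_fix act_invK.
Qed.

Lemma orbit_treequence_subshift (V : finType) (E : constraint_graph V n)
    (lab : O -> V) (w0 : O) :
  (forall i k, E (lab k) (lab (sigma i k)) (i, false) /\
               E (lab (sigma i k)) (lab k) (i, true)) ->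
  in_subshift E (orbit_treequence lab w0).
Proof.
move=> sigma_edges f [i b]; rewrite /orbit_treequence act_mul /act /= /act_letter /=.
case: b => /=; last exact: (sigma_edges i _).1.
by have := (sigma_edges i ((sigma i)^-1%g (act w0 f))).2; rewrite permKV.
Qed.

End FreeAction.

Lemma perm_eq_reindex (T : eqType) (t0 : T) (s t : seq T) : perm_eq s t ->
  exists g : nat -> nat,
    [/\ {in gtn (size s) &, injective g}, forall k, k < size s -> g k < size s
      & forall k, k < size s -> nth t0 s k = nth t0 t (g k)].
Proof.
move=> st; have size_st := perm_size st.
case/(perm_iotaP t0): st => Is Is_iota s_Is.
have size_Is : size Is = size s by rewrite (perm_size Is_iota) size_iota.
have uniq_Is : uniq Is by rewrite (perm_uniq Is_iota) iota_uniq.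
have Is_lt k : k < size s -> nth 0 Is k < size s.
  move=> lt_k; have : nth 0 Is k \in iota 0 (size t) by rewrite -(perm_mem Is_iota) mem_nth ?size_Is.
  by rewrite mem_iota size_st.
exists (nth 0 Is); split=> //.
- by move=> a b lt_a lt_b /eqP; rewrite nth_uniq ?size_Is // => /eqP.
- by move=> k lt_k; rewrite {1}s_Is (nth_map 0) ?size_Is.
Qed.

Lemma marginal_pairing (T : eqType) (t0 : T) (s : seq T) (sT : seq (T * T)) :
  perm_eq s (map fst sT) -> perm_eq (map snd sT) s ->
  exists sg : {perm 'I_(size s)},
    forall k : 'I_(size s), (nth t0 s k, nth t0 s (sg k)) \in sT.
Proof.
move=> s_fst snd_s.
have size_sT : size sT = size s by rewrite (perm_size s_fst) size_map.
have [g1 [g1_inj g1_lt s_g1]] := perm_eq_reindex t0 s_fst.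
have [g2 [g2_inj g2_lt snd_g2]] := perm_eq_reindex t0 snd_s.
rewrite size_map size_sT in g2_inj g2_lt snd_g2.
pose f (k : 'I_(size s)) : 'I_(size s) := Ordinal (g2_lt _ (g1_lt _ (ltn_ord k))).
have f_inj : injective f.
  move=> a b /(congr1 val) /= /g2_inj eq_ab.
  by apply/val_inj/g1_inj; rewrite ?inE /= ?ltn_ord //; apply: eq_ab; rewrite inE g1_lt.
exists (perm f_inj) => k; rewrite permE /= -snd_g2 ?g1_lt // s_g1 //.
have lt_g1 : g1 k < size sT by rewrite size_sT g1_lt.
by rewrite !(nth_map (t0, t0)) // -surjective_pairing mem_nth.
Qed.

Section Multisets.
Variable T : finType.

Definition multiset (N : T -> nat) : seq T := flatten [seq nseq (N v) v | v <- enum T].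

Lemma count_multiset (N : T -> nat) (P : pred T) :
  count P (multiset N) = \sum_(v | P v) N v.
Proof.
rewrite count_flatten -map_comp sumnE big_map big_enum [RHS]big_mkcond /=.
by apply: eq_bigr => v _; rewrite count_nseq; case: (P v); rewrite ?mul1n.
Qed.

Lemma mem_multiset (N : T -> nat) (v : T) : (v \in multiset N) = (0 < N v).
Proof. by rewrite -has_pred1 has_count count_multiset big_pred1_eq. Qed.

End Multisets.

Lemma multiset_marginals (T : finType) (N : T -> nat) (M : T -> T -> nat) :
  (forall v, \sum_(w : T) M v w = N v) -> (forall w, \sum_(v : T) M v w = N w) ->
  let pairs := multiset (fun p : T * T => M p.1 p.2) in
  perm_eq (multiset N) (map fst pairs) /\ perm_eq (map snd pairs) (multiset N).
Proof.
move=> rowN colN pairs; split; apply/seq.permP => P; rewrite count_map !count_multiset.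
- under eq_bigr => v _ do rewrite -rowN.
  by rewrite pair_big_dep; apply: eq_bigl => p; rewrite andbT.
- under [RHS]eq_bigr => w _ do rewrite -colN.
  rewrite (exchange_big_dep predT) //= pair_big_dep.
  by apply: eq_bigl => p; rewrite andbT.
Qed.

(* The vertices,
   repeated according to [N], form a finite set on which each [b_i] acts by
   a permutation following [M i]. *)
Lemma periodic_point_of_counts (n : nat) (V : finType) (E : constraint_graph V n)
    (N : V -> nat) (M : 'I_n -> V -> V -> nat) (v0 : V) :
  (forall i v, \sum_(w : V) M i v w = N v) ->
  (forall i w, \sum_(v : V) M i v w = N w) ->
  (forall i v w, 0 < M i v w -> E v w (i, false) /\ E w v (i, true)) ->
  0 < N v0 ->
  exists x : treequence V n, [/\ in_subshift E x, periodic x & x (fg_id n) = v0].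
Proof.
move=> rowN colN M_edges N_v0.
set s := multiset N.
have /fin_all_exists [sigma sigma_M] : forall i, exists sg : {perm 'I_(size s)},
    forall k : 'I_(size s), 0 < M i (nth v0 s k) (nth v0 s (sg k)).
  move=> i.
  have [s_fst snd_s] := multiset_marginals (rowN i) (colN i).
  have [sg sgP] := marginal_pairing v0 s_fst snd_s.
  by exists sg => k; move: (sgP k); rewrite mem_multiset.
have v0_in_s : index v0 s < size s by rewrite index_mem mem_multiset.
exists (orbit_treequence sigma (nth v0 s) (Ordinal v0_in_s)); split.
- by apply: orbit_treequence_subshift => i k; apply: M_edges.
- exact: orbit_treequence_periodic.
- by rewrite /orbit_treequence /= nth_index // mem_multiset.
Qed.

Lemma pred_ext (T : Type) (P Q : T -> Prop) : (forall x, P x <-> Q x) -> P = Q.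
Proof.
by move=> PQ; apply: functional_extensionality => x; apply: propositional_extensionality.
Qed.

Lemma infinite_sum_eventually_zero (f : nat -> R) (N : nat) :
  (forall k, (N < k)%nat -> f k = 0%R) -> infinite_sum f (sum_f_R0 f N).
Proof.
move=> f0 eps eps_pos; exists N => m le_Nm.
have -> : sum_f_R0 f m = sum_f_R0 f N.
  elim: m le_Nm => [|m IH] le_Nm; first by have -> : N = 0%nat by lia.
  case: (Nat.eq_dec m.+1 N) => [<- //|ne].
  by rewrite /= IH ?f0; [ring | apply/ltP; lia | lia].
by rewrite /R_dist Rminus_diag Rabs_R0.
Qed.

Lemma sum_f_R0_nth (A : Type) (F : option A -> R) (s : seq (option A)) (N : nat) :
  F None = 0%R -> (size s <= N)%nat ->
  sum_f_R0 (fun k => F (nth None s k)) N = \big[Rplus/0%R]_(o <- s) F o.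
Proof.
move=> F0; elim: s N => [|o s IH] N le_sN.
  by rewrite big_nil; elim: N {le_sN} => [|N IH] /=; rewrite ?nth_nil F0 ?IH; ring.
case: N le_sN => [//|N] le_sN.
by rewrite big_cons -(IH N le_sN) (decomp_sum _ N.+1) //; lia.
Qed.

Section BorelProbability.
Variables (n : nat) (V : finType) (mu : (treequence V n -> Prop) -> R).
Hypothesis mu_prob : borel_prob_measure mu.

Lemma open_borel (U : treequence V n -> Prop) : open_set U -> borel U.
Proof. by move=> U_open M _; apply. Qed.

Lemma borel_compl (A : treequence V n -> Prop) : borel A -> borel (fun x => ~ A x).
Proof.
move=> A_borel M M_sigma M_open; case: (M_sigma) => _ M_compl _.
exact/M_compl/(A_borel M M_sigma M_open).
Qed.

Lemma borel_cunion (A : nat -> treequence V n -> Prop) :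
  (forall k, borel (A k)) -> borel (fun x => exists k, A k x).
Proof.
move=> A_borel M M_sigma M_open; case: (M_sigma) => _ _ M_cunion.
by apply: M_cunion => k; apply: (A_borel k M M_sigma M_open).
Qed.

Lemma borel_union (A B : treequence V n -> Prop) :
  borel A -> borel B -> borel (fun x => A x \/ B x).
Proof.
move=> A_borel B_borel.
have -> : (fun x => A x \/ B x) = (fun x => exists k, (if k is 0 then A else B) x).
  apply: pred_ext => x; split; first by case=> ?; [exists 0%nat | exists 1%nat].
  by case=> -[|k]; [left|right].
by apply: borel_cunion => -[|k].
Qed.

Lemma borel_inter (A B : treequence V n -> Prop) :
  borel A -> borel B -> borel (fun x => A x /\ B x).
Proof.
move=> A_borel B_borel.
have -> : (fun x => A x /\ B x) = (fun x => ~ (~ A x \/ ~ B x)).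
  apply: pred_ext => x; split; first by case=> a b [].
  by move=> nab; split; apply: NNPP => ?; apply: nab; [left|right].
by apply: borel_compl; apply: borel_union; apply: borel_compl.
Qed.

Lemma cylinder_borel (K : seq (FG n)) (P : treequence V n -> Prop) :
  (forall x y, (forall f, List.In f K -> y f = x f) -> P x -> P y) -> borel P.
Proof. by move=> P_local; apply: open_borel => x Px; exists K => y xy; apply: P_local Px. Qed.

Lemma mu_ge0 (A : treequence V n -> Prop) : borel A -> (0 <= mu A)%R.
Proof. by case: mu_prob => nonneg _ _; apply: nonneg. Qed.

(* The empty set is null: additivity for the constant empty family gives
   mu(empty) + mu(empty) <= mu(empty). *)
Lemma mu_empty : mu (fun _ => False) = 0%R.
Proof.
case: mu_prob => _ _ mu_add.
have empty_borel : borel (fun _ : treequence V n => False) by apply: open_borel.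
have := mu_add (fun _ _ => False) (fun=> empty_borel) (fun _ _ _ _ f _ => f).
have -> : (fun x : treequence V n => exists _ : nat, False) = (fun _ => False).
  by apply: pred_ext => x; split => // -[].
move=> /(sum_incr _ 1) /(_ (fun=> mu_ge0 empty_borel)) /=.
have := mu_ge0 empty_borel; lra.
Qed.

(* Finite additivity, indexed by a finite type: pad an enumeration of the
   family with empty sets and use countable additivity. *)
Lemma mu_fin (I : finType) (A : I -> treequence V n -> Prop) :
  (forall i, borel (A i)) ->
  (forall i j x, i <> j -> A i x -> A j x -> False) ->
  mu (fun x => exists i, A i x) = \big[Rplus/0%R]_(i : I) mu (A i).
Proof.
move=> A_borel A_disj; case: mu_prob => _ _ mu_add.
pose s := map Some (enum I).
have s_uniq : uniq s by rewrite map_inj_uniq ?enum_uniq //; move=> a b [].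
pose B k x := if nth None s k is Some i then A i x else False.
have B_borel k : borel (B k).
  by rewrite /B; case: (nth None s k) => [i|]; [apply: A_borel | apply: open_borel].
have B_disj k1 k2 x : k1 <> k2 -> B k1 x -> B k2 x -> False.
  rewrite /B => ne_k; case e1: (nth None s k1) => [i1|] //; case e2: (nth None s k2) => [i2|] //.
  have lt_k k i : nth None s k = Some i -> (k < size s)%nat.
    by case: (ltnP k (size s)) => // ?; rewrite nth_default.
  case: (eqVneq i1 i2) => [eq_i _ _|ne_i]; last by apply: A_disj => /eqP; rewrite (negbTE ne_i).
  apply/ne_k/eqP; rewrite -(nth_uniq None (lt_k _ _ e1) (lt_k _ _ e2) s_uniq).
  by rewrite e1 e2 eq_i.
have -> : (fun x => exists i, A i x) = (fun x => exists k, B k x).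
  apply: pred_ext => x; split=> [[i Ai]|[k]].
  - by exists (index (Some i) s); rewrite /B nth_index // mem_map ?mem_enum //; move=> ? ? [].
  - by rewrite /B; case: (nth None s k) => // i Ai; exists i.
pose F o := if o is Some i then mu (A i) else 0%R.
have FB : (fun k => mu (B k)) = (fun k => F (nth None s k)).
  by apply: functional_extensionality => k; rewrite /B /F; case: (nth None s k); rewrite ?mu_empty.
have sum_s : infinite_sum (fun k => mu (B k)) (sum_f_R0 (fun k => F (nth None s k)) (size s)).
  by rewrite FB; apply: infinite_sum_eventually_zero => k lt_k; rewrite nth_default // ltnW.
rewrite (uniqueness_sum _ _ _ (mu_add B B_borel B_disj) sum_s) sum_f_R0_nth //.
by rewrite big_map big_enum.
Qed.

Lemma mu_bin (A1 A2 : treequence V n -> Prop) : borel A1 -> borel A2 ->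
  (forall x, A1 x -> A2 x -> False) ->
  mu (fun x => A1 x \/ A2 x) = (mu A1 + mu A2)%R.
Proof.
move=> A1_borel A2_borel A12.
have -> : (fun x => A1 x \/ A2 x) = (fun x => exists b : bool, (if b then A1 else A2) x).
  apply: pred_ext => x; split; first by case=> ?; [exists true | exists false].
  by case=> -[]; [left|right].
rewrite mu_fin ?big_bool //; first by case.
by case=> -[] x //= _ => [|/[swap]]; apply: A12.
Qed.

(* Monotonicity: [B] splits into [A] and [B] minus [A]. *)
Lemma mu_mono (A B : treequence V n -> Prop) : borel A -> borel B ->
  (forall x, A x -> B x) -> (mu A <= mu B)%R.
Proof.
move=> A_borel B_borel AB.
have BA_borel : borel (fun x => B x /\ ~ A x) by apply: borel_inter => //; apply: borel_compl.
have -> : B = (fun x => A x \/ (B x /\ ~ A x)).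
  apply: pred_ext => x; split; last by case=> [/AB|[]].
  by move=> Bx; case: (classic (A x)); [left | right].
rewrite mu_bin //; last by move=> x ? [].
have := mu_ge0 BA_borel; lra.
Qed.

Lemma mu_le1 (A : treequence V n -> Prop) : borel A -> (mu A <= 1)%R.
Proof.
have full_borel : borel (fun _ : treequence V n => True).
  by apply: open_borel => x _; exists [::].
move=> A_borel; case: (mu_prob) => _ <- _; exact: mu_mono.
Qed.

Lemma mu_null (X C : treequence V n -> Prop) : borel X -> borel C -> mu X = 1%R ->
  (forall x, C x -> X x -> False) -> mu C = 0%R.
Proof.
move=> X_borel C_borel X_full CX.
have CX_borel := borel_union C_borel X_borel.
have := mu_le1 CX_borel; rewrite mu_bin // X_full.
have := mu_ge0 C_borel; lra.
Qed.

End BorelProbability.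

(* The subshift is a countable intersection of cylinders, hence Borel. *)
Lemma subshift_borel (n : nat) (V : finType) (E : constraint_graph V n) :
  borel (in_subshift E).
Proof.
pose bad k (x : treequence V n) :=
  if @pickle_inv (FG n * letter n)%type k is Some (f, l)
  then ~ E (x f) (x (fg_mul f (fg_gen l))) l else False.
have -> : in_subshift E = (fun x => ~ exists k, bad k x).
  apply: pred_ext => x; split=> [x_in [k]|no_bad f l].
  - by rewrite /bad; case: pickle_inv => [[f l]|] //; apply.
  - by apply: NNPP => not_edge; apply: no_bad; exists (pickle (f, l)); rewrite /bad pickleK_inv.
apply: borel_compl; apply: borel_cunion => k; rewrite /bad.
case: pickle_inv => [[f l]|]; last by apply: open_borel.
by apply: (cylinder_borel (K := [:: f; fg_mul f (fg_gen l)])) => x y xy; rewrite !xy //=; auto.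
Qed.

Section Frequencies.
Variables (n : nat) (V : finType) (mu : (treequence V n -> Prop) -> R).
Hypothesis mu_prob : borel_prob_measure mu.

Definition gen (i : 'I_n) : FG n := fg_gen (i, false).

Definition site_freq (v : V) : R := mu (fun x => x (fg_id n) = v).
Definition edge_freq (i : 'I_n) (v w : V) : R :=
  mu (fun x => x (fg_id n) = v /\ x (gen i) = w).

Lemma site_borel (v : V) : borel (fun x : treequence V n => x (fg_id n) = v).
Proof. by apply: (cylinder_borel (K := [:: fg_id n])) => x y xy; rewrite xy //; left. Qed.

Lemma edge_borel (i : 'I_n) (v w : V) :
  borel (fun x : treequence V n => x (fg_id n) = v /\ x (gen i) = w).
Proof. by apply: (cylinder_borel (K := [:: fg_id n; gen i])) => x y xy; rewrite !xy /=; auto. Qed.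

Lemma site_freq_ge0 (v : V) : (0 <= site_freq v)%R.
Proof. exact: (mu_ge0 mu_prob (site_borel v)). Qed.

Lemma edge_freq_ge0 (i : 'I_n) (v w : V) : (0 <= edge_freq i v w)%R.
Proof. exact: (mu_ge0 mu_prob (edge_borel i v w)). Qed.

Lemma site_freq_total : \big[Rplus/0%R]_(v : V) site_freq v = 1%R.
Proof.
rewrite -(mu_fin mu_prob site_borel); last by move=> v v' x ne_v -> /ne_v.
by case: mu_prob => _ <- _; congr mu; apply: pred_ext => x; split=> // _; exists (x (fg_id n)).
Qed.

Lemma site_freq_pos : exists v, (0 < site_freq v)%R.
Proof.
apply: NNPP => none_pos; have := site_freq_total.
have : (\big[Rplus/0%R]_(v : V) site_freq v <= \big[Rplus/0%R]_(v : V) 0%R)%R.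
  by apply: sumR_le => v; apply: Rnot_lt_le => v_pos; apply: none_pos; exists v.
rewrite big1_eq; lra.
Qed.

Lemma edge_freq_row (i : 'I_n) (v : V) :
  \big[Rplus/0%R]_(w : V) edge_freq i v w = site_freq v.
Proof.
rewrite -(mu_fin mu_prob (edge_borel i v)); last by move=> w w' x ne_w [_ ->] [_ /ne_w].
by congr mu; apply: pred_ext => x; split=> [[w []]|x_v] //; exists (x (gen i)).
Qed.

(* Column sums need shift invariance: the root of [shift (b_i)^-1 x] carries
   [x (b_i)]. *)
Lemma edge_freq_col (i : 'I_n) (w : V) : shift_invariant mu ->
  \big[Rplus/0%R]_(v : V) edge_freq i v w = site_freq w.
Proof.
move=> mu_inv; rewrite -(mu_fin mu_prob (edge_borel i ^~ w)).
  2: by move=> v v' x ne_v [-> _] [/ne_v].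
rewrite /site_freq -(mu_inv (gen i) _ (site_borel w)).
have gen_root : fg_mul (fg_inv (fg_inv (gen i))) (fg_id n) = gen i by apply: val_inj.
congr mu; apply: pred_ext => x; rewrite /Defs.shift gen_root.
by split=> [[v []]|x_w] //; exists (x (fg_id n)).
Qed.

Lemma edge_freq_support (E : constraint_graph V n) (i : 'I_n) (v w : V) :
  mu (in_subshift E) = 1%R -> (0 < edge_freq i v w)%R ->
  E v w (i, false) /\ E w v (i, true).
Proof.
move=> X_full pos_vw.
have edge_in_X x : x (fg_id n) = v /\ x (gen i) = w -> in_subshift E x ->
    E v w (i, false) /\ E w v (i, true).
  move=> [x_v x_w] x_in; split.
  - have id_gen : fg_mul (fg_id n) (gen i) = gen i by apply: val_inj.
    by have := x_in (fg_id n) (i, false); rewrite -/(gen i) id_gen x_v x_w.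
  - have gen_inv : fg_mul (gen i) (fg_gen (i, true)) = fg_id n by apply: val_inj; rewrite /= eqxx.
    by have := x_in (gen i) (i, true); rewrite gen_inv x_v x_w.
apply: NNPP => not_edge.
suff : edge_freq i v w = 0%R by lra.
apply: (mu_null mu_prob (subshift_borel E) (edge_borel i v w) X_full).
by move=> x x_vw /(edge_in_X x x_vw).
Qed.

End Frequencies.

Theorem theorem5 (n : nat) (V : finType) (E : constraint_graph V n)
  (mu : (treequence V n -> Prop) -> R) :
  borel_prob_measure mu ->
  mu (in_subshift E) = 1%R ->
  shift_invariant mu ->
  (exists x : treequence V n, in_subshift E x /\ periodic x) /\
  (forall v : V,
     (mu (fun x => in_subshift E x /\ x (fg_id n) = v) > 0)%R ->
     exists x : treequence V n, [/\ in_subshift E x, periodic x & x (fg_id n) = v]).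
Proof.
move=> mu_prob X_full mu_inv.
have periodic_through v : (0 < site_freq mu v)%R ->
    exists x : treequence V n, [/\ in_subshift E x, periodic x & x (fg_id n) = v].
  move=> v_pos.
  have [N [M [N_row N_col N_v M_supp]]] :=
    integral_frequencies (site_freq_ge0 mu_prob) (edge_freq_ge0 mu_prob)
      (edge_freq_row mu_prob) (fun i w => edge_freq_col mu_prob i w mu_inv) v_pos.
  apply: (periodic_point_of_counts N_row N_col) N_v => i u w /M_supp.
  exact: edge_freq_support.
split.
- have [v /periodic_through [x [x_in x_per _]]] := site_freq_pos mu_prob.
  by exists x.
- move=> v Xv_pos; apply: periodic_through; apply: Rlt_le_trans Xv_pos _.
  apply: (mu_mono mu_prob); last by move=> x [].
  - exact: borel_inter (subshift_borel E) (site_borel v).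
  - exact: site_borel.
Qed.
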